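(* There exists a constant $C>0$ such that for all integers $n\geq2$ and all $p\in[0,1]$, $$\frac{1}{n-1}\,\mathbb{E}_{n,p}[\tau]\leq C.$$
   Context: $G(n,p)$ is the Erdős–Rényi random graph on $[n]=\{1,\dots,n\}$ with independent edge probability $p$. Given a realization, $(X_t)_{t\ge0}$ is the simple symmetric random walk with $X_0=1$ and $\tau=\inf\{t\ge1:X_t=1\}$, with the convention $\tau=1$ if vertex $1$ is isolated. $\mathbb{E}_{n,p}[\tau]$ is the expectation of $\tau$ over both the walk and the random graph. *)

From HB Require Import structures.
From mathcomp Require Import all_boot all_order all_algebra.
From mathcomp Require Import all_classical all_reals.
From mathcomp Require Import ereal sequences.
Set Implicit Arguments. Unset Strict Implicit. Unset Printing Implicit Defensive.
Import Order.TTheory GRing.Theory Num.Theory.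
Local Open Scope ring_scope.

Section GnpWalk.
Variable R : realType.
Variable n : nat.

(* A graph on the vertex set 'I_n (representing [n] = {1,..,n}) given by its
   adjacency relation; G(n,p) only produces simple graphs. *)
Definition graph := {ffun 'I_n * 'I_n -> bool}.

Definition simple_graph (g : graph) : bool :=
  [forall i, ~~ g (i, i)] && [forall i, forall j, g (i, j) == g (j, i)].

Definition gnp_prob (p : R) (g : graph) : R :=
  \prod_(ij : 'I_n * 'I_n | (ij.1 < ij.2)%N) (if g ij then p else 1 - p).

Definition deg (g : graph) (i : 'I_n) : nat := #|[set j | g (i, j)]|.

Definition trans (g : graph) (i j : 'I_n) : R :=
  if g (i, j) then (deg g i)%:R^-1 else 0.

Fixpoint path_prob (g : graph) (x : 'I_n) (s : seq 'I_n) : R :=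
  if s is y :: s' then trans g x y * path_prob g y s' else 1.

(* P(tau > t) for the walk started at v0, tau = inf{t >= 1 : X_t = v0}:
   the walk avoids v0 at times 1..t.  If v0 is isolated all transition
   probabilities out of v0 vanish, so P(tau > t) = 0 for t >= 1, i.e. the
   convention tau = 1. *)
Definition tail_prob (g : graph) (v0 : 'I_n) (t : nat) : R :=
  \sum_(s : t.-tuple 'I_n | all (fun v => v != v0) s) path_prob g v0 s.

(* E[tau] = sum_{t >= 0} P(tau > t)  (value in the extended reals, +oo allowed) *)
Definition exp_return (g : graph) (v0 : 'I_n) : \bar R :=
  (\sum_(0 <= t <oo) (tail_prob g v0 t)%:E)%E.

Definition gnp_exp_return (p : R) (v0 : 'I_n) : \bar R :=
  (\sum_(g : graph | simple_graph g) (gnp_prob p g)%:E * exp_return g v0)%E.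

End GnpWalk.

(* The walk is reversible for the degree
   measure, so P(tau > t+1) = deg(v)^-1 * sum_(x <> v) deg(x) P_x(the walk
   first hits v at step t+1); summing over t gives the Kac-type bound
   E[tau] <= 2 + deg(v)^-1 * #{(x, y) : x ~ y, x <> v, y <> v}.
   In G(n,p) an edge xy with x, y <> v is independent of deg(v), so each of
   the (n-1)^2 pairs contributes p E[1/deg(v)]; and since adding the edge vu
   at most doubles a positive deg(v), (n-1) p E[1/deg(v)] <= 2 E[deg(v)/deg(v)]
   <= 2.
   Hence E_{n,p}[tau] <= 2 + 2(n-1) <= 4(n-1). *)

From HB Require Import structures.
From mathcomp Require Import all_boot all_order all_algebra.
From mathcomp Require Import all_classical all_reals.
From mathcomp Require Import ereal sequences.
From mathcomp Require Import normedtype.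
From mathcomp Require Import ring lra.
Set Implicit Arguments. Unset Strict Implicit. Unset Printing Implicit Defensive.
Import Order.TTheory GRing.Theory Num.Theory.
Local Open Scope ring_scope.

Section SimpleGraph.
Variables (n : nat) (g : graph n).
Hypothesis sg : simple_graph g.

Lemma simple_graph_irr i : g (i, i) = false.
Proof. by case/andP: sg => /forallP /(_ i) /negPf. Qed.

Lemma simple_graph_sym i j : g (i, j) = g (j, i).
Proof. by case/andP: sg => _ /forallP /(_ i) /forallP /(_ j) /eqP. Qed.

End SimpleGraph.

Section Transitions.
Variables (R : realType) (n : nat) (g : graph n).

Lemma degE i : (deg g i)%:R = \sum_j (g (i, j))%:R :> R.
Proof.
rewrite /deg -sum1dep_card natr_sum big_mkcond /=.
by apply: eq_bigr => j _; case: (g (i, j)).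
Qed.

Lemma transE x y : trans R g x y = (g (x, y))%:R * (deg g x)%:R^-1.
Proof. by rewrite /trans; case: (g _); rewrite ?mul1r ?mul0r. Qed.

Lemma trans_ge0 x y : 0 <= trans R g x y.
Proof. by rewrite transE mulr_ge0 // invr_ge0. Qed.

Lemma deg_mul_trans x y : (deg g x)%:R * trans R g x y = (g (x, y))%:R.
Proof.
rewrite /trans; case gxy: (g (x, y)); last by rewrite mulr0.
have dx_gt0 : (0 < deg g x)%N by apply/card_gt0P; exists y; rewrite inE.
by rewrite mulfV // pnatr_eq0 -lt0n.
Qed.

Lemma sum_trans_le1 x : \sum_y trans R g x y <= 1.
Proof.
under eq_bigr do rewrite transE.
rewrite -mulr_suml -degE.
have [->|dx_neq0] := eqVneq ((deg g x)%:R : R) 0; first by rewrite mul0r ler01.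
by rewrite mulfV.
Qed.

End Transitions.

Section KilledWalk.
Variables (R : realType) (n : nat) (g : graph n) (v0 : 'I_n).

Definition killed (phi : 'I_n -> R) (x : 'I_n) : R :=
  \sum_(y | y != v0) trans R g x y * phi y.

Definition hit (x : 'I_n) : R := trans R g x v0.

Lemma sum_path_prob_avoid t x :
  \sum_(s : t.-tuple 'I_n | all (fun v => v != v0) s) path_prob R g x s =
  iter t killed (fun=> 1) x.
Proof.
elim: t x => [|t IH] x /=.
  by rewrite (big_pred1 [tuple]) // => s; rewrite [s]tuple0 /=; apply/esym/eqP.
rewrite (reindex (fun p : 'I_n * t.-tuple 'I_n => [tuple of p.1 :: p.2])) /=; last first.
  exists (fun s : t.+1.-tuple 'I_n => (thead s, [tuple of behead s])).
    by move=> [y s] _ /=; congr pair; apply: val_inj.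
  by move=> s _ /=; rewrite -tuple_eta.
rewrite -(pair_big_dep (fun y => y != v0)
  (fun y (s : t.-tuple 'I_n) => all (fun v => v != v0) s)
  (fun y (s : t.-tuple 'I_n) => trans R g x y * path_prob R g y s)) /=.
by apply: eq_bigr => y _; rewrite -mulr_sumr IH.
Qed.

Lemma iter_killed_ge0 t phi x : (forall y, 0 <= phi y) -> 0 <= iter t killed phi x.
Proof.
move=> phi_ge0; elim: t x => [|t IH] x //=.
by apply: sumr_ge0 => y _; rewrite mulr_ge0 // trans_ge0.
Qed.

Lemma killed_sum T (F : nat -> 'I_n -> R) x :
  killed (fun y => \sum_(0 <= t < T) F t y) x = \sum_(0 <= t < T) killed (F t) x.
Proof. by rewrite /killed exchange_big; apply: eq_bigr => y _; rewrite mulr_sumr. Qed.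

(* [iter t killed hit x] is the probability that the walk from [x] first
   visits [v0] at step [t.+1]. *)
Lemma sum_iter_killed_hit_le1 T x : \sum_(0 <= t < T) iter t killed hit x <= 1.
Proof.
elim: T x => [|T IH] x; first by rewrite big_geq // ler01.
rewrite big_nat_recl //= -killed_sum.
apply: le_trans (sum_trans_le1 R g x).
rewrite (bigD1 v0) //= lerD2l; apply: ler_sum => y _.
by rewrite -[X in _ <= X]mulr1 ler_wpM2l ?trans_ge0 ?IH.
Qed.

Definition deg_dot (phi psi : 'I_n -> R) : R :=
  \sum_(x | x != v0) (deg g x)%:R * phi x * psi x.

Hypothesis sg : simple_graph g.

(* Reversibility of the walk with respect to the degree measure. *)
Lemma killed_sym phi psi : deg_dot (killed phi) psi = deg_dot phi (killed psi).
Proof.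
rewrite /deg_dot /killed.
transitivity (\sum_(x | x != v0) \sum_(y | y != v0) (g (x, y))%:R * phi y * psi x).
  apply: eq_bigr => x _; rewrite mulr_sumr mulr_suml; apply: eq_bigr => y _.
  by rewrite -deg_mul_trans; ring.
rewrite exchange_big /=; apply: eq_bigr => y _.
rewrite mulr_sumr; apply: eq_bigr => x _.
by rewrite (simple_graph_sym sg) -deg_mul_trans; ring.
Qed.

Lemma iter_killed_sym t phi psi :
  deg_dot (iter t killed phi) psi = deg_dot phi (iter t killed psi).
Proof. by elim: t phi psi => [|t IH] phi psi //=; rewrite killed_sym IH -iterSr. Qed.

Lemma tail_prob_succ t :
  tail_prob R g v0 t.+1 = (deg g v0)%:R^-1 * deg_dot (iter t killed hit) (fun=> 1).
Proof.
rewrite /tail_prob sum_path_prob_avoid iter_killed_sym /= /killed /deg_dot mulr_sumr.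
apply: eq_bigr => y _.
by rewrite /hit transE (simple_graph_sym sg) -deg_mul_trans; ring.
Qed.

Definition kac_bound : R :=
  1 + (deg g v0)%:R^-1 * \sum_(x | x != v0) (deg g x)%:R.

Lemma sum_tail_prob_le T : \sum_(0 <= t < T) tail_prob R g v0 t <= kac_bound.
Proof.
have one_le_bound : 1 <= kac_bound.
  by rewrite /kac_bound lerDl mulr_ge0 ?invr_ge0 ?sumr_ge0.
case: T => [|T]; first by rewrite big_geq // (le_trans ler01).
rewrite big_nat_recl //.
under eq_bigr do rewrite tail_prob_succ.
rewrite /tail_prob sum_path_prob_avoid /= /kac_bound lerD2l -mulr_sumr.
rewrite ler_wpM2l ?invr_ge0 // /deg_dot exchange_big /=; apply: ler_sum => x _.
under eq_bigr do rewrite mulr1.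
by rewrite -mulr_sumr -[X in _ <= X]mulr1 ler_wpM2l ?sum_iter_killed_hit_le1.
Qed.

Lemma exp_return_le_kac : (exp_return R g v0 <= kac_bound%:E)%E.
Proof.
rewrite /exp_return; apply: lime_le.
  apply: is_cvg_nneseries => t _ _.
  by rewrite lee_fin /tail_prob sum_path_prob_avoid iter_killed_ge0.
by apply: nearW => T; rewrite sumEFin lee_fin sum_tail_prob_le.
Qed.

End KilledWalk.

Section BernoulliProduct.
Variables (R : comPzRingType) (I : finType) (p : R).

Definition bernoulli_weight (f : {ffun I -> bool}) : R :=
  \prod_i (if f i then p else 1 - p).

Lemma sum_bernoulli_weight : \sum_f bernoulli_weight f = 1.
Proof.
rewrite /bernoulli_weight -(bigA_distr_bigA (fun i (b : bool) => if b then p else 1 - p)).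
by apply: big1 => i _; rewrite big_bool /=; ring.
Qed.

Variable i0 : I.

Definition raise (f : {ffun I -> bool}) : {ffun I -> bool} :=
  [ffun i => (i == i0) || f i].

Definition flip (f : {ffun I -> bool}) : {ffun I -> bool} :=
  [ffun i => if i == i0 then ~~ f i else f i].

Lemma flipK : involutive flip.
Proof. by move=> f; apply/ffunP => i; rewrite !ffunE; case: eqP => // _; apply: negbK. Qed.

Lemma flip_at f : flip f i0 = ~~ f i0.
Proof. by rewrite ffunE eqxx. Qed.

Lemma raise_id (f : {ffun I -> bool}) : f i0 -> raise f = f.
Proof. by move=> fi0; apply/ffunP => i; rewrite ffunE; case: eqP => // ->. Qed.

Lemma raise_flip (f : {ffun I -> bool}) : f i0 -> raise (flip f) = f.
Proof. by move=> fi0; apply/ffunP => i; rewrite !ffunE; case: eqP => //= ->. Qed.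

Definition bernoulli_weight_off (f : {ffun I -> bool}) : R :=
  \prod_(i | i != i0) (if f i then p else 1 - p).

Lemma bernoulli_weightD1 f :
  bernoulli_weight f = (if f i0 then p else 1 - p) * bernoulli_weight_off f.
Proof. by rewrite /bernoulli_weight (bigD1 i0). Qed.

Lemma bernoulli_weight_off_flip f : bernoulli_weight_off (flip f) = bernoulli_weight_off f.
Proof. by apply: eq_bigr => i /negPf i_neq0; rewrite ffunE i_neq0. Qed.

(* The coordinate [i0] is independent of the others. *)
Lemma sum_bernoulli_weight_coord (phi : {ffun I -> bool} -> R) :
  \sum_f bernoulli_weight f * (f i0)%:R * phi f =
  p * \sum_f bernoulli_weight f * phi (raise f).
Proof.
rewrite (bigID (fun f : {ffun I -> bool} => f i0)) /=.
rewrite [in RHS](bigID (fun f : {ffun I -> bool} => f i0)) /=.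
rewrite [X in _ + X]big1 ?addr0; last by move=> f /negPf ->; rewrite mulr0 mul0r.
rewrite [X in _ = _ * (_ + X)](reindex_inj (can_inj flipK)) /=.
under [X in _ = _ * (_ + X)]eq_big => [f|f].
- by rewrite flip_at negbK over.
- rewrite flip_at negbK => fi0.
  by rewrite bernoulli_weightD1 flip_at fi0 raise_flip // bernoulli_weight_off_flip over.
rewrite -big_split mulr_sumr; apply: eq_bigr => f fi0 /=.
by rewrite bernoulli_weightD1 fi0 raise_id //= mulr1; ring.
Qed.

End BernoulliProduct.

Section EdgeEncoding.
Variable n : nat.

Definition upair : {pred 'I_n * 'I_n} := [pred ij : 'I_n * 'I_n | (ij.1 < ij.2)%N].

Definition edge_slot := {ij in upair}.

Definition graph_of (f : {ffun edge_slot -> bool}) : graph n :=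
  [ffun ij => if @insub _ (mem upair) edge_slot ij is Some e then f e
              else if @insub _ (mem upair) edge_slot (ij.2, ij.1) is Some e then f e
              else false].

Definition slots_of (g : graph n) : {ffun edge_slot -> bool} := [ffun e => g (val e)].

Lemma graph_of_val f e : graph_of f (val e) = f e.
Proof. by rewrite ffunE valK. Qed.

Lemma graph_of_simple f : simple_graph (graph_of f).
Proof.
apply/andP; split.
  apply/forallP => i; rewrite ffunE /=.
  by case: (@insubP _ (mem upair) edge_slot (i, i)) => [e|] //=; rewrite inE /= ltnn.
apply/forallP => i; apply/forallP => j; rewrite !ffunE /=.
case: (@insubP _ (mem upair) edge_slot (i, j)) => [e|] /=; rewrite inE /= => lt_ij;
case: (@insubP _ (mem upair) edge_slot (j, i)) => [e'|] /=; rewrite inE /= => lt_ji //.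
by move: (ltn_trans lt_ij lt_ji); rewrite ltnn.
Qed.

Lemma slots_ofK : cancel graph_of slots_of.
Proof. by move=> f; apply/ffunP => e; rewrite ffunE graph_of_val. Qed.

Lemma graph_ofK g : simple_graph g -> graph_of (slots_of g) = g.
Proof.
move=> sg; apply/ffunP => -[i j]; rewrite !ffunE /=.
case: (@insubP _ (mem upair) edge_slot (i, j)) => [e|] /=; rewrite inE /= => lt_ij.
  by move=> <-; rewrite ffunE.
case: (@insubP _ (mem upair) edge_slot (j, i)) => [e|] /=; rewrite inE /= => lt_ji.
  by move=> ev; rewrite ffunE (simple_graph_sym sg) -ev.
have -> : i = j by apply/val_inj/eqP; rewrite eqn_leq leqNgt lt_ji leqNgt lt_ij.
by rewrite (simple_graph_irr sg).
Qed.

Lemma sum_simple_graph (R : nmodType) (F : graph n -> R) :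
  \sum_(g | simple_graph g) F g = \sum_f F (graph_of f).
Proof.
rewrite (reindex_onto graph_of slots_of graph_ofK); apply: eq_bigl => f.
by rewrite graph_of_simple slots_ofK eqxx.
Qed.

Lemma gnp_prob_graph_of (R : realType) (p : R) f :
  gnp_prob p (graph_of f) = bernoulli_weight p f.
Proof.
rewrite /gnp_prob (eq_bigl (mem upair)) // big_sub.
by apply: eq_bigr => e _; rewrite graph_of_val.
Qed.

Definition add_edge (a b : 'I_n) (g : graph n) : graph n :=
  [ffun ij => (ij == (a, b)) || (ij == (b, a)) || g ij].

Lemma add_edgeC a b : add_edge a b = add_edge b a.
Proof. by apply: funext => g; apply/ffunP => ij; rewrite !ffunE [X in X || _]orbC. Qed.

Lemma graph_of_raise a b (ab : (a, b) \in upair) f :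
  graph_of (raise (Sub (a, b) ab : edge_slot) f) = add_edge a b (graph_of f).
Proof.
have ne_ab (i j : 'I_n) : ~~ (i < j)%N -> ((i, j) == (a, b)) = false.
  by move=> ge_ij; apply: contraNF ge_ij => /eqP[-> ->].
have ne_ba (i j : 'I_n) : ~~ (j < i)%N -> ((i, j) == (b, a)) = false.
  by move=> ge_ji; apply: contraNF ge_ji => /eqP[-> ->].
apply/ffunP => -[i j]; rewrite !ffunE /=.
case: (@insubP _ (mem upair) edge_slot (i, j)) => [e|] /=; rewrite inE /= => lt_ij.
  by move=> ev; rewrite ffunE -val_eqE /= ev (ne_ba i j) ?orbF // -leqNgt ltnW.
case: (@insubP _ (mem upair) edge_slot (j, i)) => [e|] /=; rewrite inE /= => lt_ji.
  by move=> ev; rewrite ffunE -val_eqE /= ev (ne_ab i j) // !xpair_eqE andbC.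
by rewrite (ne_ab i j) // (ne_ba i j).
Qed.

End EdgeEncoding.

Section Gnp.
Variables (R : realType) (n : nat) (p : R).

Lemma gnp_prob_ge0 (g : graph n) : 0 <= p <= 1 -> 0 <= gnp_prob p g.
Proof.
by case/andP=> p_ge0 p_le1; apply: prodr_ge0 => ij _; case: (g ij); rewrite ?subr_ge0.
Qed.

Lemma sum_gnp_prob : \sum_(g : graph n | simple_graph g) gnp_prob p g = 1.
Proof.
rewrite sum_simple_graph; under eq_bigr do rewrite gnp_prob_graph_of.
exact: sum_bernoulli_weight.
Qed.

Lemma sum_gnp_prob_edge (a b : 'I_n) (phi : graph n -> R) : a != b ->
  \sum_(g : graph n | simple_graph g) gnp_prob p g * (g (a, b))%:R * phi g =
  p * \sum_(g : graph n | simple_graph g) gnp_prob p g * phi (add_edge a b g).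
Proof.
wlog lt_ab : a b / (a < b)%N => [wlog_ab | _].
  case: (ltngtP a b) => [lt_ab|lt_ba|/val_inj ->] neq_ab; last by rewrite eqxx in neq_ab.
    exact: wlog_ab.
  rewrite add_edgeC -(wlog_ab b a lt_ba) 1?eq_sym //.
  by apply: eq_bigr => g sg; rewrite (simple_graph_sym sg).
have ab : (a, b) \in @upair n by [].
rewrite !sum_simple_graph.
have graph_of_ab f : graph_of f (a, b) = f (Sub (a, b) ab) := graph_of_val f (Sub (a, b) ab).
under eq_bigr do rewrite gnp_prob_graph_of graph_of_ab.
rewrite sum_bernoulli_weight_coord; congr (_ * _); apply: eq_bigr => f _.
by rewrite gnp_prob_graph_of graph_of_raise.
Qed.

End Gnp.

Section AddEdgeDegree.
Variables (n : nat) (v0 : 'I_n).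

Lemma deg_add_edge_neq (x y : 'I_n) (g : graph n) : x != v0 -> y != v0 ->
  deg (add_edge x y g) v0 = deg g v0.
Proof.
move=> x_neq0 y_neq0; apply: eq_card => j.
by rewrite !inE ffunE !xpair_eqE (eq_sym v0 x) (eq_sym v0 y) (negbTE x_neq0) (negbTE y_neq0).
Qed.

Lemma deg_add_edge_gt0 (u : 'I_n) (g : graph n) : (0 < deg (add_edge v0 u g) v0)%N.
Proof. by apply/card_gt0P; exists u; rewrite !inE ffunE eqxx. Qed.

Lemma deg_add_edge_le (u : 'I_n) (g : graph n) : u != v0 ->
  (deg (add_edge v0 u g) v0 <= (deg g v0).+1)%N.
Proof.
move=> u_neq0; apply: (@leq_trans #|u |: [set j | g (v0, j)]|).
  apply: subset_leq_card; apply/fintype.subsetP => j.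
  by rewrite !inE ffunE !xpair_eqE eqxx (eq_sym v0 u) (negbTE u_neq0) /= orbF.
by rewrite cardsU1 addnC -addn1 leq_add2l leq_b1.
Qed.

Lemma inv_deg_le_add_edge (R : realFieldType) (u : 'I_n) (g : graph n) : u != v0 ->
  (deg g v0)%:R^-1 <= 2 * (deg (add_edge v0 u g) v0)%:R^-1 :> R.
Proof.
move=> u_neq0; have [-> | d_gt0] := posnP (deg g v0).
  by rewrite invr0 mulr_ge0 // invr_ge0.
have d'_gt0 := deg_add_edge_gt0 u g.
have d'_le2d : (deg (add_edge v0 u g) v0 <= 2 * deg g v0)%N.
  by apply: leq_trans (deg_add_edge_le g u_neq0) _; rewrite mul2n -addnn -add1n leq_add2r.
rewrite ler_pdivlMr ?ltr0n // mulrC ler_pdivrMr ?ltr0n //.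
by rewrite -natrM ler_nat.
Qed.

End AddEdgeDegree.

Lemma invr_mul_le1 (R : realFieldType) (x : R) : x^-1 * x <= 1.
Proof. by have [->|x_neq0] := eqVneq x 0; rewrite ?mulr0 ?ler01 // mulVf. Qed.

Lemma sum_neq_const (R : pzRingType) (n : nat) (v0 : 'I_n) (c : R) :
  \sum_(u : 'I_n | u != v0) c = (n - 1)%:R * c.
Proof.
rewrite (eq_bigl (mem (predC1 v0))) // sumr_const cardC1 card_ord.
by rewrite mulr_natl subn1.
Qed.

Section KacBoundEdges.
Variables (R : realType) (n : nat) (v0 : 'I_n) (g : graph n).
Hypothesis sg : simple_graph g.

Lemma sum_neq_adj : \sum_(u | u != v0) (g (v0, u))%:R = (deg g v0)%:R :> R.
Proof. by rewrite degE [in RHS](bigD1 v0) //= (simple_graph_irr sg) add0r. Qed.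

Lemma sum_neq_deg :
  \sum_(x | x != v0) (deg g x)%:R =
  (deg g v0)%:R + \sum_(x | x != v0) \sum_(y | y != v0) (g (x, y))%:R :> R.
Proof.
under eq_bigr do rewrite degE (bigD1 v0) //=.
rewrite big_split /= -sum_neq_adj; congr (_ + _).
by apply: eq_bigr => x _; rewrite (simple_graph_sym sg).
Qed.

Lemma kac_bound_le_edges :
  kac_bound R g v0 <=
  2 + \sum_(x | x != v0) \sum_(y | y != v0) (g (x, y))%:R * (deg g v0)%:R^-1.
Proof.
rewrite /kac_bound sum_neq_deg mulrDr addrA lerD ?lerD2l ?invr_mul_le1 //.
rewrite mulr_sumr ler_sum // => x _; rewrite mulr_sumr ler_sum // => y _.
by rewrite mulrC.
Qed.

End KacBoundEdges.

Section MeanKacBound.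
Variables (R : realType) (n : nat) (p : R) (v0 : 'I_n).
Hypothesis p01 : 0 <= p <= 1.

Let p_ge0 : 0 <= p. Proof. by case/andP: p01. Qed.

Lemma mean_inv_deg_ge0 :
  0 <= \sum_(g : graph n | simple_graph g) gnp_prob p g * (deg g v0)%:R^-1.
Proof. by rewrite sumr_ge0 // => g _; rewrite mulr_ge0 ?gnp_prob_ge0 ?invr_ge0. Qed.

(* For [x, y != v0] the edge [xy] is independent of the degree of [v0]. *)
Lemma mean_edge_inv_deg (x y : 'I_n) : x != v0 -> y != v0 ->
  \sum_(g : graph n | simple_graph g) gnp_prob p g * ((g (x, y))%:R * (deg g v0)%:R^-1) <=
  p * \sum_(g : graph n | simple_graph g) gnp_prob p g * (deg g v0)%:R^-1.
Proof.
move=> x_neq0 y_neq0; have [<- | neq_xy] := eqVneq x y.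
  rewrite big1 ?mulr_ge0 ?mean_inv_deg_ge0 // => g sg.
  by rewrite (simple_graph_irr sg) mul0r mulr0.
under eq_bigr do rewrite mulrA.
rewrite sum_gnp_prob_edge //.
by under eq_bigr do rewrite deg_add_edge_neq //.
Qed.

Lemma mean_inv_deg_le :
  (n - 1)%:R * (p * \sum_(g : graph n | simple_graph g) gnp_prob p g * (deg g v0)%:R^-1) <= 2.
Proof.
have edge_v0 (u : 'I_n) : u != v0 ->
    p * \sum_(g : graph n | simple_graph g) gnp_prob p g * (deg g v0)%:R^-1 <=
    2 * \sum_(g : graph n | simple_graph g)
          gnp_prob p g * ((g (v0, u))%:R * (deg g v0)%:R^-1).
  move=> u_neq0; under [X in _ <= _ * X]eq_bigr do rewrite mulrA.
  rewrite sum_gnp_prob_edge 1?eq_sym // mulrCA ler_wpM2l // mulr_sumr.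
  apply: ler_sum => g _.
  by rewrite mulrCA ler_wpM2l ?gnp_prob_ge0 ?inv_deg_le_add_edge.
rewrite -(sum_neq_const v0); apply: le_trans (ler_sum _ edge_v0) _.
rewrite -mulr_sumr -[X in _ <= X]mulr1 ler_wpM2l // exchange_big /=.
rewrite -[X in _ <= X](sum_gnp_prob n p); apply: ler_sum => g sg.
rewrite -mulr_sumr -mulr_suml sum_neq_adj // -[X in _ <= X]mulr1.
by rewrite ler_wpM2l ?gnp_prob_ge0 // mulrC invr_mul_le1.
Qed.

Lemma mean_kac_bound_le : (2 <= n)%N ->
  \sum_(g : graph n | simple_graph g) gnp_prob p g * kac_bound R g v0 <= 4 * (n - 1)%:R.
Proof.
move=> n_ge2.
set Q := \sum_(g : graph n | simple_graph g) gnp_prob p g * (deg g v0)%:R^-1.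
have edges_le : \sum_(g : graph n | simple_graph g) gnp_prob p g *
    \sum_(x | x != v0) \sum_(y | y != v0) (g (x, y))%:R * (deg g v0)%:R^-1 <=
    (n - 1)%:R * ((n - 1)%:R * (p * Q)).
  under eq_bigr do rewrite mulr_sumr.
  rewrite exchange_big -(sum_neq_const v0); apply: ler_sum => x x_neq0.
  under eq_bigr do rewrite mulr_sumr.
  rewrite exchange_big -(sum_neq_const v0); apply: ler_sum => y y_neq0.
  exact: mean_edge_inv_deg.
have N_ge1 : 1 <= (n - 1)%:R :> R by rewrite (ler_nat R 1) leq_subRL ?(ltnW n_ge2).
have pQ_le : (n - 1)%:R * (p * Q) <= 2 := mean_inv_deg_le.
apply: le_trans (_ : 2 + (n - 1)%:R * ((n - 1)%:R * (p * Q)) <= _); last by nra.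
apply: le_trans (_ : \sum_(g : graph n | simple_graph g) gnp_prob p g *
    (2 + \sum_(x | x != v0) \sum_(y | y != v0) (g (x, y))%:R * (deg g v0)%:R^-1) <= _).
  by apply: ler_sum => g sg; rewrite ler_wpM2l ?gnp_prob_ge0 ?kac_bound_le_edges.
under eq_bigr do rewrite mulrDr.
by rewrite big_split /= -mulr_suml (sum_gnp_prob n p) mul1r lerD2l.
Qed.

End MeanKacBound.

Lemma gnp_exp_return_le (R : realType) (n : nat) (p : R) (v0 : 'I_n) :
  0 <= p <= 1 -> (2 <= n)%N -> (gnp_exp_return p v0 <= (4 * (n - 1)%:R)%:E)%E.
Proof.
move=> p01 n_ge2; rewrite /gnp_exp_return.
apply: (@le_trans _ _
  (\sum_(g : graph n | simple_graph g) gnp_prob p g * kac_bound R g v0)%:E).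
  rewrite -sumEFin; apply: lee_sum => g sg.
  by rewrite EFinM lee_wpmul2l ?lee_fin ?gnp_prob_ge0 ?exp_return_le_kac.
by rewrite lee_fin mean_kac_bound_le.
Qed.

Theorem lemma2 (R : realType) :
  exists C : R, 0 < C /\
    forall (n : nat) (hn : (2 <= n)%N) (p : R), 0 <= p <= 1 ->
      (((n - 1)%:R)^-1%:E * gnp_exp_return p (Ordinal (ltnW hn)) <= C%:E)%E.
Proof.
exists 4; split => // n hn p p01.
have N_gt0 : (0 : R) < (n - 1)%:R by rewrite ltr0n subn_gt0.
apply: le_trans (lee_wpmul2l _ (gnp_exp_return_le _ p01 hn)) _.
  by rewrite lee_fin invr_ge0 ltW.
by rewrite -EFinM lee_fin mulrCA mulVf ?gt_eqF // mulr1.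
Qed.
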